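(* Let $(\eta_k)_{k\in\mathbb{N}}$ be independent random variables with values in $\mathbb{N}$, $P(\eta_k=i)=p_{ik}$ with $p_{ik}\ge0$ and $\sum_{i=1}^\infty p_{ik}=1$ for all $k$. Suppose there exists $i_0\in\mathbb{N}$ with $$\sum_{k=1}^\infty p_{i_0k}=+\infty.$$ Then the random variable $$\eta=\sum_{k=1}^\infty\frac{(-1)^{k-1}}{\eta_1(\eta_1+\eta_2)\cdots(\eta_1+\eta_2+\dots+\eta_k)}$$ has a distribution that is singular with respect to Lebesgue measure. *)

From HB Require Import structures.
From mathcomp Require Import all_boot all_order all_algebra.
From mathcomp Require Import finmap.
From mathcomp Require Import all_classical all_reals all_analysis.
Set Implicit Arguments. Unset Strict Implicit. Unset Printing Implicit Defensive.
Import Order.TTheory GRing.Theory Num.Theory numFieldNormedType.Exports.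
Local Open Scope classical_set_scope.
Local Open Scope ring_scope.

(* Mutual independence of a sequence of N-valued random variables:
   product rule over every finite subfamily of indices and every choice of
   (measurable -- all subsets of nat are) sets of values. *)
Definition mutually_independent_nat d (T : measurableType d) (R : realType)
  (P : probability T R) (X : nat -> T -> nat) : Prop :=
  forall (S : {fset nat}) (A : nat -> set nat),
    P (\bigcap_(k in [set` S]) (X k @^-1` A k)) =
    (\prod_(k <- S) P (X k @^-1` A k))%E.

(* eta_series X t = sum_{k>=1} (-1)^{k-1} / (S_1 S_2 ... S_k), S_j = X_1+...+X_j,
   written with 0-based indices (X 0 is eta_1). *)
Definition eta_series (T : Type) (R : realType) (X : nat -> T -> nat) (t : T) : R :=
  limn (fun n : nat => (\sum_(0 <= k < n)
    ((-1) ^+ k / \prod_(j < k.+1) (\sum_(l < j.+1) (X l t)%:R)) : R)).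

From HB Require Import structures.
From mathcomp Require Import all_boot all_order all_algebra.
From mathcomp Require Import finmap.
From mathcomp Require Import all_classical all_reals all_analysis.
From mathcomp Require Import measurable_realfun.
From mathcomp Require Import zify ring lra.
Set Implicit Arguments. Unset Strict Implicit. Unset Printing Implicit Defensive.
Import Order.TTheory GRing.Theory Num.Theory numFieldNormedType.Exports.
Local Open Scope classical_set_scope.
Local Open Scope ring_scope.

(* Write S_k = eta_1 + ... + eta_k.  The alternating series lies within
   1/(S_1 ... S_k S_(k+1)) of its k-th partial sum, hence in a closed ball of
   radius 1/(S_1 ... S_k (S_k + 1)) determined by S_1 < ... < S_k.  When
   S_k = m and eta_(k+1) = i0, the ball of level k+1 is determined by m, m + i0
   and the set s of earlier partial sums, a subset of {1, ..., m-1}; as the sum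
   over s of 1/prod s is m, these balls have total length at most
   2/((m+i0)(m+i0+1)), which is summable in m.  By the
   first Borel-Cantelli lemma the points lying in infinitely many of these
   unions form a Lebesgue-null set.  Independence and the divergence of
   sum_k p_(i0,k) give eta_k = i0 infinitely often almost surely (second
   Borel-Cantelli lemma), and since S_k grows to infinity the value of the
   series then lies in that null set. *)

Definition alternating {R : pzRingType} (u : R ^nat) : R ^nat :=
  fun k => (-1) ^+ k * u k.

Section alternating_series.
Variables (R : realType) (u : R ^nat).
Hypotheses (u_ge0 : forall k, 0 <= u k) (u_nonincr : forall k, u k.+1 <= u k)
  (u_cvg0 : u @ \oo --> 0).
Local Notation S := (series (alternating u)).

Lemma alternating_sum_bound m l :
  0 <= (-1) ^+ m * \sum_(m <= k < m + l) alternating u k <= u m.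
Proof.
elim: l m => [|l IHl] m; first by rewrite addn0 big_geq // mulr0 lexx u_ge0.
rewrite big_ltn ?addnS ?ltnS ?leq_addr // mulrDr /alternating mulrA.
rewrite -expr2 sqrr_sign mul1r -addSn.
have /andP[tail_ge0 tail_le] := IHl m.+1.
rewrite exprS mulN1r mulNr in tail_ge0 tail_le.
by have := u_nonincr m => um; apply/andP; split; lra.
Qed.

Lemma alternating_series_dist m n : (m <= n)%N -> `|S n - S m| <= u m.
Proof.
move=> mn; rewrite !seriesEnat /= (big_cat_nat (leq0n m) mn) /= addrAC subrr add0r.
have /andP[ge0 le] := alternating_sum_bound m (n - m); rewrite subnKC // in ge0 le.
by rewrite -[X in X <= _]mul1r -(normr_sign R m) -normrM ger0_norm.
Qed.

Lemma is_cvg_alternating_series : cvgn S.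
Proof.
apply/cauchy_cvgP; apply: cauchy_exP => e e_gt0.
have [m um] : exists m, u m < e.
  have /cvgrPdist_lt /(_ e e_gt0) [N _ uN] := u_cvg0.
  by exists N; have := uN N (leqnn N); rewrite /= sub0r normrN ger0_norm.
exists (S m).
suff : \forall n \near \oo, ball (S m) e (S n) by [].
near=> n; rewrite /ball /= distrC (le_lt_trans _ um) //.
by apply: alternating_series_dist; near: n; exact: nbhs_infty_ge.
Unshelve. all: by end_near. Qed.

Lemma alternating_series_lim_dist m : `|limn S - S m| <= u m.
Proof.
have near_m : \forall n \near \oo, `|S n - S m| <= u m.
  by apply: filterS (nbhs_infty_ge m); exact: alternating_series_dist.
rewrite ler_norml; apply/andP; split.
- rewrite lerBrDr; apply: limr_ge; first exact: is_cvg_alternating_series.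
  by apply: filterS near_m => n; rewrite ler_norml => /andP[+ _]; lra.
- rewrite lerBlDr; apply: limr_le; first exact: is_cvg_alternating_series.
  by apply: filterS near_m => n; rewrite ler_norml => /andP[_ +]; lra.
Qed.

End alternating_series.

Section partial_sums.
Variable a : nat -> nat.

Definition psum (j : nat) : nat := (\sum_(l < j.+1) a l)%N.

Definition pprod (k : nat) : nat := (\prod_(j < k.+1) psum j)%N.

Fixpoint rev_psums (n : nat) : seq nat :=
  if n is j.+1 then psum j :: rev_psums j else [::].

Lemma psumS j : psum j.+1 = (psum j + a j.+1)%N.
Proof. by rewrite /psum big_ord_recr. Qed.

Lemma pprodS k : pprod k.+1 = (pprod k * psum k.+1)%N.
Proof. by rewrite /pprod big_ord_recr. Qed.

Lemma size_rev_psums n : size (rev_psums n) = n.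
Proof. by elim: n => //= n ->. Qed.

Lemma prod_rev_psums n : (\prod_(y <- rev_psums n) y = \prod_(j < n) psum j)%N.
Proof.
elim: n => [|n IHn]; first by rewrite big_nil big_ord0.
by rewrite /= big_cons IHn big_ord_recr mulnC.
Qed.

Hypothesis a_gt0 : forall k, (0 < a k)%N.

Lemma psum_ltS j : (psum j < psum j.+1)%N.
Proof. by rewrite psumS -addn1 leq_add2l. Qed.

Lemma psum_gt j : (j < psum j)%N.
Proof.
elim: j => [|j IHj]; first by rewrite /psum big_ord1.
exact: leq_ltn_trans IHj (psum_ltS j).
Qed.

Lemma psum_gt0 j : (0 < psum j)%N.
Proof. exact: leq_ltn_trans (leq0n j) (psum_gt j). Qed.

Lemma pprod_gt k : (k < pprod k)%N.
Proof.
elim: k => [|k IHk]; first by rewrite /pprod big_ord1 psum_gt.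
by rewrite pprodS; have := psum_gt k.+1; nia.
Qed.

Lemma pprod_gt0 k : (0 < pprod k)%N.
Proof. exact: leq_ltn_trans (leq0n k) (pprod_gt k). Qed.

Lemma head_rev_psums_lt n : (head 0 (rev_psums n) < psum n)%N.
Proof. by case: n => [|n]; [exact: psum_gt | exact: psum_ltS]. Qed.

Lemma sorted_rev_psums n : sorted gtn (rev_psums n).
Proof. by elim: n => // -[|n] IHn //=; rewrite psum_ltS; exact: IHn. Qed.

Lemma rev_psums_bounded n : all (fun x => 0 < x < psum n)%N (rev_psums n).
Proof.
elim: n => //= n IHn; rewrite psum_gt0 psum_ltS /=.
apply/allP => x /(allP IHn) /andP[-> /ltn_trans]; apply; exact: psum_ltS.
Qed.

End partial_sums.

Definition inv_pprod {R : realType} (a : nat -> nat) : R ^nat :=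
  fun k => (pprod a k)%:R^-1.

Lemma eta_seriesE (T : Type) (R : realType) (X : nat -> T -> nat) t :
  eta_series R X t = limn (series (alternating (inv_pprod (X ^~ t)))).
Proof.
rewrite /eta_series; congr (limn _); apply/funext => n.
rewrite seriesEnat; apply: eq_bigr => k _.
by rewrite /alternating /inv_pprod /pprod natr_prod; under eq_bigr do rewrite natr_sum.
Qed.

Section inv_pprod.
Variables (R : realType) (a : nat -> nat).

Lemma inv_pprod_ge0 k : 0 <= @inv_pprod R a k.
Proof. by rewrite /inv_pprod invr_ge0. Qed.

Hypothesis a_gt0 : forall k, (0 < a k)%N.

Lemma inv_pprod_nonincr k : @inv_pprod R a k.+1 <= inv_pprod a k.
Proof.
rewrite /inv_pprod lef_pV2 ?posrE ?ltr0n ?pprod_gt0 //.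
by rewrite ler_nat pprodS leq_pmulr ?psum_gt0.
Qed.

Lemma cvg_inv_pprod : @inv_pprod R a @ \oo --> 0.
Proof.
apply: (@squeeze_cvgr _ _ _ _ (fun=> 0) (@harmonic R)); last exact: cvg_harmonic.
- apply: nearW => k; rewrite inv_pprod_ge0 /=.
  by rewrite /inv_pprod lef_pV2 ?posrE ?ltr0n ?pprod_gt0 // ler_nat pprod_gt.
- exact: cvg_cst.
Qed.

End inv_pprod.

Fixpoint decr_lists (n : nat) : seq (seq nat) :=
  if n is m.+1 then decr_lists m ++ [seq n :: s | s <- decr_lists m]
  else [:: [::]].

Lemma decr_lists_complete n s :
  sorted gtn s -> all (fun x => 0 < x <= n)%N s -> s \in decr_lists n.
Proof.
elim: n s => [|n IHn] [|x s] //=.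
- by move=> _ /andP[/andP[x_gt0 x_le0]]; lia.
- by move=> _ _; rewrite mem_cat IHn.
move=> sorted_xs /andP[/andP[x_gt0 x_le] s_bounded].
have s_lt_x : all (gtn x) s.
  by apply: order_path_min sorted_xs => y z w /=; lia.
have s_le_n : all (fun y => 0 < y <= n)%N s.
  apply/allP => y ys; move/allP: s_bounded => /(_ y ys) /andP[-> _] /=.
  by move/allP: s_lt_x => /(_ y ys) /=; lia.
rewrite mem_cat; have [-> | x_neq] := eqVneq x n.+1.
  apply/orP; right; apply/mapP; exists s => //.
  by apply: IHn => //; exact: path_sorted sorted_xs.
by rewrite IHn //= s_le_n andbT; move/eqP: x_neq; lia.
Qed.

(* Summing over all subsets of {1..n} gives prod_(1 <= j <= n) (1 + 1/j). *)
Lemma sum_inv_prod_decr_lists (R : numFieldType) n :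
  \sum_(s <- decr_lists n) ((\prod_(x <- s) x)%N%:R)^-1 = n.+1%:R :> R.
Proof.
elim: n => [|n IHn] /=; first by rewrite big_seq1 big_nil invr1.
rewrite big_cat big_map IHn.
under eq_bigr do rewrite big_cons natrM invfM.
by rewrite -mulr_sumr IHn mulVf ?pnatr_eq0 // [RHS]mulrS addrC.
Qed.

Section cylinders.
Variable R : realType.

Fixpoint alt_center (r : seq nat) : R :=
  if r is _ :: r' then alt_center r' + (-1) ^+ size r' / (\prod_(y <- r) y)%N%:R
  else 0.

(* For r = [:: S_(n-1); ...; S_0] the partial sums of a positive sequence read
   backwards, this closed ball contains every alternating series whose first n
   partial sums are given by r. *)
Definition cylinder (r : seq nat) : set R :=
  closed_ball (alt_center r) ((\prod_(y <- r) y) * (head 0 r).+1)%N%:R^-1.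

Lemma measurable_cylinder r : measurable (cylinder r).
Proof. exact: measurable_closed_ball. Qed.

Lemma lebesgue_measure_cylinder r : lebesgue_measure (cylinder r) =
  (((\prod_(y <- r) y) * (head 0 r).+1)%N%:R^-1 *+ 2)%:E.
Proof. by rewrite lebesgue_measure_closed_ball // invr_ge0. Qed.

Variable a : nat -> nat.
Hypothesis a_gt0 : forall k, (0 < a k)%N.

Lemma alt_center_rev_psums n :
  alt_center (rev_psums a n) = series (alternating (inv_pprod a)) n.
Proof.
elim: n => [|n IHn]; first by rewrite seriesEnat /= big_geq.
rewrite /= size_rev_psums IHn !seriesEnat /= big_nat_recr //=.
by rewrite -/(rev_psums a n.+1) prod_rev_psums.
Qed.

Lemma lim_in_cylinder n :
  cylinder (rev_psums a n) (limn (series (alternating (@inv_pprod R a)))).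
Proof.
have P_gt0 : (0 < \prod_(y <- rev_psums a n) y)%N.
  by rewrite prod_rev_psums prodn_gt0 // => j; exact: psum_gt0.
rewrite /cylinder closed_ballE ?invr_gt0 ?ltr0n ?muln_gt0 ?P_gt0 //.
rewrite /closed_ball_ /= alt_center_rev_psums distrC.
apply: le_trans (alternating_series_lim_dist (@inv_pprod_ge0 R a)
  (inv_pprod_nonincr R a_gt0) (cvg_inv_pprod a_gt0) n) _.
rewrite /inv_pprod lef_pV2 ?posrE ?ltr0n ?muln_gt0 ?P_gt0 ?pprod_gt0 //.
have : (\prod_(y <- rev_psums a n) y * (head 0 (rev_psums a n)).+1 <= pprod a n)%N.
  by rewrite /pprod big_ord_recr -prod_rev_psums leq_pmul2l // head_rev_psums_lt.
by rewrite -(ler_nat R).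
Qed.

End cylinders.

Lemma content_bigsetU_seq_le d (T : ringOfSetsType d) (R : realFieldType)
    (mu : {content set T -> \bar R}) (I : Type) (s : seq I) (F : I -> set T) :
  (forall i, measurable (F i)) ->
  (mu (\big[setU/set0]_(i <- s) F i) <= \sum_(i <- s) mu (F i))%E.
Proof.
move=> mF; elim: s => [|i s IHs]; first by rewrite !big_nil measure0.
rewrite !big_cons; apply: le_trans (measureU2 mu (mF i) _) (leeD (lexx _) IHs).
exact: bigsetU_measurable.
Qed.

Lemma nneseries_two_div_consecutive_le (R : realType) :
  (\sum_(n <oo) ((2 / (n.+1 * n.+2)%N%:R : R))%:E <= 2%:E)%E.
Proof.
apply: lime_le; first by apply: is_cvg_nneseries => n _ _; rewrite lee_fin divr_ge0.
apply: nearW => K; rewrite sumEFin lee_fin.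
rewrite (@telescope_sumr_eq _ _ _ (fun n => - (2 / n.+1%:R))) //.
  by rewrite divr1 opprK addrC lerBlDr lerDl divr_ge0.
move=> k _; have k_ge0 := ler0n R k; rewrite natrM; field.
by apply/andP; split; apply: lt0r_neq0; lra.
Qed.

Section gap_cylinders.
Variable R : realType.

(* The cylinders of every level at which the partial sums jump from m to m + i0. *)
Definition gap_cylinders (i0 m : nat) : set R :=
  \big[setU/set0]_(s <- decr_lists m.-1) cylinder [:: m + i0, m & s]%N.

Lemma measurable_gap_cylinders i0 m : measurable (gap_cylinders i0 m).
Proof. by apply: bigsetU_measurable => s _; exact: measurable_cylinder. Qed.

Lemma lim_in_gap_cylinders (a : nat -> nat) (a_gt0 : forall k, (0 < a k)%N) i0 k :
  a k.+1 = i0 ->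
  gap_cylinders i0 (psum a k) (limn (series (alternating (@inv_pprod R a)))).
Proof.
move=> ak; rewrite /gap_cylinders -bigcup_seq; exists (rev_psums a k).
  apply: decr_lists_complete; first exact: sorted_rev_psums.
  apply/allP => x /(allP (rev_psums_bounded a_gt0 k)) /andP[x_gt0 x_lt].
  by rewrite x_gt0 -ltnS prednK // (leq_ltn_trans _ x_lt).
by have := @lim_in_cylinder R _ a_gt0 k.+2; rewrite /= psumS ak.
Qed.

Lemma lebesgue_measure_gap_cylinders_le i0 m :
  (lebesgue_measure (gap_cylinders i0 m) <= (2 / ((m + i0) * (m + i0).+1)%N%:R)%:E)%E.
Proof.
apply: le_trans (content_bigsetU_seq_le lebesgue_measure _
  (fun s => @measurable_cylinder R _)) _.
rewrite (eq_bigr _ (fun s _ => @lebesgue_measure_cylinder R _)) sumEFin lee_fin.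
set c : R := ((m + i0) * (m + i0).+1)%N%:R^-1.
have radiusE s :
    ((\prod_(y <- [:: m + i0, m & s]) y) * (head 0 [:: m + i0, m & s]).+1)%N%:R^-1
    = c * (m%:R^-1 * (\prod_(y <- s) y)%N%:R^-1) :> R.
  by rewrite /c /= !big_cons !natrM !invfM; ring.
under eq_bigr do rewrite radiusE.
rewrite sumrMnl -!mulr_sumr sum_inv_prod_decr_lists mulr_natl mulrC.
have m_ratio_le1 : m%:R^-1 * m.-1.+1%:R <= 1 :> R.
  by case: m {radiusE c} => [|m]; rewrite ?invr0 ?mul0r // mulVf ?pnatr_eq0.
by rewrite lerMn2r /= ler_piMl ?invr_ge0 // m_ratio_le1 andbT.
Qed.

End gap_cylinders.

Section gap_lim_sup.
Variable R : realType.

Lemma lebesgue_measure_lim_sup_gap_cylinders i0 : (0 < i0)%N ->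
  lebesgue_measure (lim_sup_set (@gap_cylinders R i0)) = 0%E.
Proof.
move=> i0_gt0; apply: lim_sup_set_cvg0 => [m|]; first exact: measurable_gap_cylinders.
apply: le_lt_trans (le_trans _ (nneseries_two_div_consecutive_le R)) (ltry 2).
apply: lee_nneseries => [n _ _|n _]; first exact: measure_ge0.
apply: le_trans (lebesgue_measure_gap_cylinders_le _ _ _) _; rewrite lee_fin.
rewrite ler_wpM2l // lef_pV2 ?posrE ?ltr0n ?muln_gt0 ?addn_gt0 ?i0_gt0 ?orbT //.
by rewrite ler_nat; nia.
Qed.

Lemma lim_in_lim_sup_gap_cylinders (a : nat -> nat) (a_gt0 : forall k, (0 < a k)%N) i0 :
  (forall N, exists2 k, (N <= k)%N & a k = i0) ->
  lim_sup_set (@gap_cylinders R i0) (limn (series (alternating (@inv_pprod R a)))).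
Proof.
move=> hits N _; have [[|k] Nk ak] := hits N.+1 => //.
exists (psum a k); last exact: lim_in_gap_cylinders.
exact: ltnW (leq_trans Nk (psum_gt a_gt0 k)).
Qed.

End gap_lim_sup.

Section measurable_nat_valued.
Context d (T : measurableType d).

Lemma measurable_fun_natop2 (op : nat -> nat -> nat) (f g : T -> nat) :
  measurable_fun setT f -> measurable_fun setT g ->
  measurable_fun setT (fun t => op (f t) (g t)).
Proof.
move=> mf mg _ B _; rewrite setTI.
have -> : (fun t => op (f t) (g t)) @^-1` B = \bigcup_i \bigcup_j
    (f @^-1` [set i] `&` g @^-1` [set j] `&` [set _ | B (op i j)]).
  apply/seteqP; split => [t Bt | t [i _ [j _ [[/= fi gj] Bij]]]].
    by exists (f t) => //; exists (g t).
  by rewrite /= fi gj.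
apply: bigcupT_measurable => i; apply: bigcupT_measurable => j.
apply: measurableI; first apply: measurableI.
- by rewrite -[_ @^-1` _]setTI; apply: mf.
- by rewrite -[_ @^-1` _]setTI; apply: mg.
- have [Bij | nBij] := pselect (B (op i j)).
    by rewrite (_ : [set _ | _] = setT) //; apply/seteqP; split.
  by rewrite (_ : [set _ | _] = set0) //; apply/seteqP; split.
Qed.

Lemma measurable_fun_natbig (op : nat -> nat -> nat) (idx : nat) (I : Type)
    (s : seq I) (F : I -> T -> nat) :
  (forall i, measurable_fun setT (F i)) ->
  measurable_fun setT (fun t => \big[op/idx]_(i <- s) F i t).
Proof.
move=> mF; elim: s => [|i s IHs].
  by under eq_fun do rewrite big_nil; exact: measurable_cst.
under eq_fun do rewrite big_cons.
exact: measurable_fun_natop2.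
Qed.

Lemma measurable_eta_series (R : realType) (X : nat -> T -> nat) :
  (forall k, measurable_fun setT (X k)) -> (forall k t, (0 < X k t)%N) ->
  measurable_fun setT (eta_series R X).
Proof.
move=> mX X_gt0.
apply: (measurable_fun_cvg (h := fun n t => series (alternating (inv_pprod (X ^~ t))) n)).
  move=> n; apply: measurable_sum => k.
  apply: (measurableT_comp (f := fun m : nat => (-1) ^+ k * (m%:R : R)^-1)
    (g := fun t => pprod (X ^~ t) k)) => //.
  by apply: measurable_fun_natbig => j; exact: measurable_fun_natbig.
move=> t _; rewrite eta_seriesE.
by apply: is_cvg_alternating_series => [k|k|];
  [exact: inv_pprod_ge0 | exact: inv_pprod_nonincr | exact: cvg_inv_pprod].
Qed.

End measurable_nat_valued.

Lemma measurable_lim_sup_set d (T : measurableType d) (F : (set T) ^nat) :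
  (forall k, measurable (F k)) -> measurable (lim_sup_set F).
Proof. by move=> mF; apply: bigcapT_measurable => n; exact: bigcup_measurable. Qed.

Lemma prod_onem_le_inv_sum (R : realFieldType) (I : Type) (s : seq I) (q : I -> R) :
  (forall i, 0 <= q i <= 1) ->
  \prod_(i <- s) (1 - q i) <= (1 + \sum_(i <- s) q i)^-1.
Proof.
move=> q01; elim: s => [|i s IHs]; first by rewrite !big_nil addr0 invr1.
rewrite !big_cons; have /andP[qi_ge0 qi_le1] := q01 i.
have S_ge0 : 0 <= \sum_(j <- s) q j by apply: sumr_ge0 => j _; case/andP: (q01 j).
apply: le_trans (ler_wpM2l _ IHs) _; first by rewrite subr_ge0.
rewrite ler_pdivrMr ?ltr_wpDr // mulrC ler_pdivlMr ?ltr_wpDr ?addr_ge0 //.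
nra.
Qed.

Section second_borel_cantelli.
Context d (T : measurableType d) (R : realType) (P : probability T R).
Variables (X : nat -> T -> nat) (B : set nat) (q : nat -> R).
Hypotheses (X_meas : forall k, measurable_fun setT (X k))
  (X_indep : mutually_independent_nat P X)
  (X_law : forall k, P (X k @^-1` B) = (q k)%:E)
  (q_div : (\sum_(0 <= k <oo) (q k)%:E)%E = +oo%E).

Let measurable_preimage k (A : set nat) : measurable (X k @^-1` A).
Proof. by rewrite -[_ @^-1` _]setTI; exact: X_meas. Qed.

Let q_ge0 k : 0 <= q k.
Proof. by rewrite -lee_fin -X_law measure_ge0. Qed.

Let q_le1 k : q k <= 1.
Proof. by rewrite -lee_fin -X_law probability_le1. Qed.

Lemma partial_sums_unbounded N M : exists L, M <= \sum_(N <= k < N + L) q k.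
Proof.
have /cvgeyPge /(_ (M + \sum_(0 <= k < N) q k)) [K _ sumK] :
    (\sum_(0 <= k < n) (q k)%:E)%E @[n --> \oo] --> +oo%E.
  by rewrite -q_div; apply: is_cvg_nneseries => k _ _; rewrite lee_fin.
exists (maxn K N - N)%N; rewrite subnKC ?leq_maxr //.
have := sumK (maxn K N) (leq_maxl K N); rewrite /= sumEFin lee_fin.
by rewrite (big_cat_nat (leq0n N) (leq_maxr K N)) /= addrC lerD2r.
Qed.

Lemma prob_tail_avoid N : P (\bigcap_(k in [set k | (N <= k)%N]) X k @^-1` ~` B) = 0%E.
Proof.
apply/eqP; rewrite eq_le measure_ge0 andbT; apply/lee_addgt0Pr => e e_gt0.
rewrite add0e; have [L sumL] := partial_sums_unbounded N e^-1.
pose S := seq_fset tt (iota N L).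
have tail_sub : \bigcap_(k in [set k | (N <= k)%N]) X k @^-1` (~` B) `<=`
    \bigcap_(k in [set` S]) X k @^-1` (~` B).
  by move=> t avoid k; rewrite /= seq_fsetE mem_iota => /andP[Nk _]; exact: avoid.
apply: le_trans (le_measure _ _ _ tail_sub) _; rewrite ?inE.
- by apply: bigcap_measurableType => k _; exact: measurable_preimage.
- by apply: bigcap_measurableType => k _; exact: measurable_preimage.
have := X_indep S (fun=> ~` B) => /= ->.
have avoidE k : P (X k @^-1` ~` B) = (1 - q k)%:E.
  by rewrite -preimage_setC probability_setC // X_law EFinB.
under eq_bigr do rewrite avoidE.
rewrite prodEFin lee_fin (perm_big _ (seq_fset_perm tt (iota N L))) /=.
rewrite undup_id ?iota_uniq //; apply: le_trans (prod_onem_le_inv_sum _ _) _.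
  by move=> k; rewrite q_ge0 q_le1.
have sum_ge0 : 0 <= \sum_(k <- iota N L) q k by exact: sumr_ge0.
rewrite invf_ple ?posrE ?ltr_wpDr //.
by move: sumL; rewrite /index_iota addKn; lra.
Qed.

Lemma prob_lim_sup_preimage : P (lim_sup_set (fun k => X k @^-1` B)) = 1%E.
Proof.
have m_lim_sup : measurable (lim_sup_set (fun k => X k @^-1` B)).
  by apply: measurable_lim_sup_set => k; exact: measurable_preimage.
have : P (~` lim_sup_set (fun k => X k @^-1` B)) = 0%E.
  apply/eqP; rewrite eq_le measure_ge0 andbT.
  rewrite /lim_sup_set setC_bigcap.
  under eq_bigcupr do rewrite setC_bigcup.
  pose avoid N := \bigcap_(k in [set k | (N <= k)%N]) X k @^-1` (~` B).
  have m_avoid N : measurable (avoid N).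
    by apply: bigcap_measurableType => k _; exact: measurable_preimage.
  apply: le_trans
    (@measure_sigma_subadditive _ _ _ P _ avoid m_avoid _ (@subset_refl _ _)) _.
    exact: bigcup_measurable.
  by rewrite (eq_eseriesr (fun N _ => prob_tail_avoid N)) eseries0.
move=> null; rewrite -[lim_sup_set _]setCK probability_setC ?null ?sube0 //.
exact: measurableC.
Qed.

End second_borel_cantelli.

Theorem theorem7 (d : measure_display) (T : measurableType d) (R : realType)
  (P : probability T R) (eta : nat -> T -> nat) (p : nat -> nat -> R)
  (eta_meas : forall k, measurable_fun setT (eta k))
  (eta_pos : forall k t, (0 < eta k t)%N)
  (eta_indep : mutually_independent_nat P eta)
  (eta_law : forall i k, P [set t | eta k t = i] = (p i k)%:E)
  (p_ge0 : forall i k, 0 <= p i k)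
  (p_sum1 : forall k, (\sum_(1 <= i <oo) (p i k)%:E)%E = 1%E)
  (i0 : nat) (i0_pos : (0 < i0)%N)
  (p_div : (\sum_(0 <= k <oo) (p i0 k)%:E)%E = +oo%E) :
  exists A : set R,
    [/\ measurable A, (lebesgue_measure A = 0)%E,
        measurable (eta_series R eta @^-1` A)
      & P (eta_series R eta @^-1` A) = 1%E].
Proof.
pose A := lim_sup_set (@gap_cylinders R i0).
pose hits := lim_sup_set (fun k => eta k @^-1` [set i0]).
have m_hits : measurable hits.
  by apply: measurable_lim_sup_set => k; rewrite -[_ @^-1` _]setTI; exact: eta_meas.
have P_hits : P hits = 1%E.
  exact: prob_lim_sup_preimage eta_meas eta_indep (fun k => eta_law i0 k) p_div.
have hits_sub : hits `<=` eta_series R eta @^-1` A.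
  move=> t hit_t; rewrite /= eta_seriesE.
  by apply: lim_in_lim_sup_gap_cylinders => // N; exact: hit_t N I.
have m_preimage : measurable (eta_series R eta @^-1` A).
  rewrite -[_ @^-1` _]setTI; apply: measurable_eta_series => //.
  by apply: measurable_lim_sup_set => m; exact: measurable_gap_cylinders.
exists A; split => //.
- by apply: measurable_lim_sup_set => m; exact: measurable_gap_cylinders.
- exact: lebesgue_measure_lim_sup_gap_cylinders.
- apply/le_anti/andP; split; first exact: probability_le1.
  by rewrite -P_hits le_measure ?inE.
Qed.
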